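(* Let $G$ be a graph and $\{C_1,\dots,C_\ell\}$ a min-max clique covering of $G$ with simple intersection. If $S$ is a positive zero forcing set of $G$, then for all $i,j\in\{1,\dots,\ell\}$ the sets $(V(G)\setminus S)\cap C_{i,j}$ and $(V(G)\setminus S)\cap C_{i,i}$ each have size at most one.
   Context: A clique covering of a graph is a set of cliques such that every edge lies in at least one of them; $\operatorname{cc}(G)$ is its minimum size. A min-max clique covering is a clique covering of size $\operatorname{cc}(G)$ consisting of maximal cliques; it has simple intersection if no three distinct cliques of it share a vertex. $C_{i,j}=C_i\cap C_j$ for $i\ne j$ and $C_{i,i}=C_i\setminus\bigcup_{j\ne i}C_j$. Positive zero forcing: initially the vertices of $S$ are black and all others white; repeatedly, let $W_1,\dots,W_k$ be the vertex sets of components of $G$ minus the black vertices; a black vertex $u$ whose only white neighbour in the subgraph induced by $W_i\cup(\text{black vertices})$ is $w$ may turn $w$ black. $S$ is a positive zero forcing set if eventually all vertices become black. *)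

(* A finite simple graph is a symmetric irreflexive
   relation e : rel T on a finType T (vertex set V(G) = T). *)
From mathcomp Require Import all_boot.
Set Implicit Arguments. Unset Strict Implicit. Unset Printing Implicit Defensive.

Section Graph.
Variables (T : finType) (e : rel T).

Definition clique (K : {set T}) : Prop :=
  forall x y, x \in K -> y \in K -> x != y -> e x y.

Definition maximal_clique (K : {set T}) : Prop :=
  clique K /\ forall K' : {set T}, clique K' -> K \subset K' -> K' = K.

Definition clique_covering (P : {set {set T}}) : Prop :=
  (forall K, K \in P -> clique K) /\
  (forall x y, e x y -> exists2 K, K \in P & (x \in K) && (y \in K)).

Definition is_cc (n : nat) : Prop :=
  (exists P, clique_covering P /\ #|P| = n) /\
  (forall P, clique_covering P -> n <= #|P|).

Definition min_max_clique_covering (l : nat) (C : 'I_l -> {set T}) : Prop :=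
  injective C /\
  clique_covering [set C i | i in 'I_l] /\
  is_cc l /\
  (forall i, maximal_clique (C i)).

Definition simple_intersection (l : nat) (C : 'I_l -> {set T}) : Prop :=
  forall i j k : 'I_l, i != j -> j != k -> i != k -> C i :&: C j :&: C k = set0.

Definition Cij (l : nat) (C : 'I_l -> {set T}) (i j : 'I_l) : {set T} :=
  if i == j then C i :\: \bigcup_(k | k != i) C k else C i :&: C j.

Definition white_rel (B : {set T}) : rel T :=
  fun x y => [&& e x y, x \notin B & y \notin B].

(* Positive zero forcing: sets of black vertices reachable from S by
   applying the positive colour-change rule one force at a time.
   A force u -> w with w white: the component W of G - B containing w is
   [set z | z \notin B & connect (white_rel B) w z], and w must be the only
   white neighbour of u in G[W ∪ B], i.e. the only neighbour of u in W. *)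
Inductive pzf_reach (S : {set T}) : {set T} -> Prop :=
| pzf_base : pzf_reach S S
| pzf_step (B : {set T}) (u w : T) :
    pzf_reach S B -> u \in B -> w \notin B -> e u w ->
    (forall z, z \notin B -> connect (white_rel B) w z -> e u z -> z = w) ->
    pzf_reach S (w |: B).

Definition positive_zero_forcing_set (S : {set T}) : Prop :=
  pzf_reach S [set: T].

End Graph.

(* Two distinct white vertices of some C_{i,j} lie in exactly the same cliques
   of the covering, hence are adjacent twins.  A force u -> w onto one of them
   is impossible: the other one is a white neighbour of u in the same
   component of G - B.  So twins that start white stay white forever. *)

From mathcomp Require Import all_boot.

Set Implicit Arguments.
Unset Strict Implicit.
Unset Printing Implicit Defensive.

Section PositiveZeroForcing.
Variables (T : finType) (e : rel T).
Hypothesis e_sym : symmetric e.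

Definition adjacent_twins (x y : T) : Prop :=
  [/\ x != y, e x y,
      forall u, u != y -> e u x -> e u y &
      forall u, u != x -> e u y -> e u x].

Lemma adjacent_twinsC x y : adjacent_twins x y -> adjacent_twins y x.
Proof. by case=> nxy exy txy tyx; split; rewrite // 1?eq_sym // e_sym. Qed.

Lemma pzf_step_not_twin (B : {set T}) u x y :
  adjacent_twins x y -> x \notin B -> y \notin B -> u \in B -> e u x ->
  (forall z, z \notin B -> connect (white_rel e B) x z -> e u z -> z = x) ->
  False.
Proof.
case=> nxy exy txy _ xB yB uB eux only_x.
have uy : u != y by apply: contraNneq yB => <-.
have xy_white : connect (white_rel e B) x y.
  by apply: connect1; rewrite /white_rel exy xB yB.
by move: nxy; rewrite (only_x y yB xy_white (txy u uy eux)) eqxx.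
Qed.

Lemma pzf_reach_twins_white (S : {set T}) x y :
  adjacent_twins x y -> x \notin S -> y \notin S ->
  forall B, pzf_reach e S B -> x \notin B /\ y \notin B.
Proof.
move=> txy xS yS B; elim=> [//|B' u w _ [xB yB] uB wB euw only_w].
have wx : w != x.
  by apply/eqP=> wx; subst w; apply: (pzf_step_not_twin txy xB yB uB euw).
have wy : w != y.
  apply/eqP=> wy; subst w.
  exact: (pzf_step_not_twin (adjacent_twinsC txy) yB xB uB euw).
by rewrite !in_setU1 !negb_or eq_sym wx eq_sym wy xB yB.
Qed.

Lemma pzf_set_meets_twins (S : {set T}) x y :
  positive_zero_forcing_set e S -> adjacent_twins x y -> (x \in S) || (y \in S).
Proof.
move=> hS txy; apply/negPn/negP; rewrite negb_or => /andP [xS yS].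
by have [] := pzf_reach_twins_white txy xS yS hS; rewrite inE.
Qed.

Lemma covering_adj_transfer (P : {set {set T}}) a b u :
  clique_covering e P -> (forall K, K \in P -> a \in K -> b \in K) ->
  u != b -> e u a -> e u b.
Proof.
case=> cl cov a_to_b ub eua.
have [K PK /andP [uK aK]] := cov u a eua.
exact: cl PK u b uK (a_to_b K PK aK) ub.
Qed.

Lemma covering_adjacent_twins (P : {set {set T}}) x y :
  clique_covering e P -> x != y ->
  (exists2 K, K \in P & x \in K) ->
  (forall K, K \in P -> (x \in K) = (y \in K)) ->
  adjacent_twins x y.
Proof.
move=> cover nxy [K0 PK0 xK0] same; have [cl _] := cover.
split=> //; first by apply: (cl K0 PK0 x y xK0 _ nxy); rewrite -same.
  by move=> u; apply: covering_adj_transfer cover _ => K PK; rewrite same.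
by move=> u; apply: covering_adj_transfer cover _ => K PK; rewrite same.
Qed.

End PositiveZeroForcing.

Section SimpleIntersection.
Variables (T : finType) (l : nat) (C : 'I_l -> {set T}).
Hypothesis hsi : simple_intersection C.

Lemma Cij_sub i j : Cij C i j \subset C i.
Proof. by rewrite /Cij; case: eqP => _; [apply: subsetDl | apply: subsetIl]. Qed.

Lemma mem_Cij_cliques i j x k :
  x \in Cij C i j -> x \in C k = (k == i) || (k == j).
Proof.
rewrite /Cij; case: eqP => [<-|/eqP nij].
  rewrite !inE orbb => /andP [x_others xi].
  case: eqVneq => [-> //|ki]; apply: contraNF x_others => xk.
  by apply/bigcupP; exists k.
rewrite !inE => /andP [xi xj].
case: eqVneq => [-> //|ki]; case: eqVneq => [-> //|kj].
apply/negP => xk; have := @hsi i j k nij.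
rewrite eq_sym kj eq_sym ki => /(_ isT isT).
by move/setP/(_ x); rewrite !inE xi xj xk.
Qed.

End SimpleIntersection.

Theorem mainTheorem13 (T : finType) (e : rel T)
  (e_sym : symmetric e) (e_irr : irreflexive e)
  (l : nat) (C : 'I_l -> {set T})
  (hC : min_max_clique_covering e C) (hsi : simple_intersection C)
  (S : {set T}) (hS : positive_zero_forcing_set e S) :
  forall i j : 'I_l, #|~: S :&: Cij C i j| <= 1.
Proof.
move=> i j; rewrite leqNgt; apply/negP => /card_gt1P [x [y [+ + nxy]]].
rewrite !inE => /andP [xS xC] /andP [yS yC].
have [_ [cover _]] := hC.
have twins : adjacent_twins e x y.
  apply: (covering_adjacent_twins cover nxy).
    by exists (C i); [apply: imset_f | apply: subsetP (Cij_sub C i j) x xC].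
  by move=> _ /imsetP [k _ ->]; rewrite (mem_Cij_cliques hsi k xC)
    (mem_Cij_cliques hsi k yC).
by move: (pzf_set_meets_twins e_sym hS twins); rewrite (negbTE xS) (negbTE yS).
Qed.
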